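(* Let $\beta$ be a pseudo-Anosov 3-braid with MP-ratio $\alpha$, and for $k\ge0$ let $\epsilon_k=\operatorname{sgn}(x_k)\in\{\pm1\}$. Then for every $k\ge0$: (1) if $\epsilon_k=+1$ and the 4-tuple of $\mathcal T_{k+1}$ has Type 1, then $i_{k+1}=2i_k$; (2) if $\epsilon_k=+1$ and it has Type 2, then $i_{k+1}=2i_k-1$; (3) if $\epsilon_k=-1$ and it has Type 1, then $i_{k+1}=2i_k-1$; (4) if $\epsilon_k=-1$ and it has Type 2, then $i_{k+1}=2i_k$. Consequently $\epsilon_{k+1}=-1$ in Cases (1) and (4), and $\epsilon_{k+1}=+1$ in Cases (2) and (3). In particular, a Type 1 maximal splitting $\mathcal T_k\rightharpoonup\mathcal T_{k+1}$ changes the sign of the train track and a Type 2 maximal splitting preserves it.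
   Context: Identify $B_3$ with the mapping class group of the 3-punctured disk $D_3$. A measured train track on $D_3$ is a smooth graph with trivalent switches where the three edges are tangent, each edge with positive weight, the weight on one side of each switch equalling the sum of the two on the other; weights up to scaling. Maximal splitting $\tau\rightharpoonup\tau'$ splits simultaneously along all edges of largest weight. The paper fixes measured train tracks $\mathrm M(a,b),\mathrm W(a,b)$ ($a,b>0$) on $D_3$ with six edges and four switches. For a pseudo-Anosov 3-braid $\beta$ there is a unique irrational $\alpha\in(0,1)$ (the MP-ratio) such that exactly one of $\mathrm M(1,\alpha),\mathrm M(\alpha,1),\mathrm W(\alpha,1),\mathrm W(1,\alpha)$ is invariant under $\beta$; call it $\tau_0$, let $n=\lfloor1/\alpha\rfloor$ and $\tau_0\rightharpoonup\tau_1\rightharpoonup\cdots$ the maximal splitting sequence. From $\tau_{n+4}$ on all train tracks have exactly three distinct edge weights; set $\mathcal T_k=\tau_{n+3+k}$, $k\ge1$. The 4-tuple $(x_k,y_k;z_k,w_k)\in\mathbb Z^4$ of $\mathcal T_k$ is given by: smallest weight $\tfrac12(x_k+y_k\alpha)$, second smallest $\tfrac12(z_k+w_k\alpha)$; the sign of $\mathcal T_k$ is $\operatorname{sgn}(x_k)$ (nonzero). Set $(x_0,y_0;z_0,w_0)=(1,-n;0,1)$. For $k\ge0$ the 4-tuple of $\mathcal T_{k+1}$ is either $(z_k-x_k,w_k-y_k;x_k,y_k)$ (Type 1; the splitting $\mathcal T_k\rightharpoonup\mathcal T_{k+1}$ is then called Type 1) or $(x_k,y_k;z_k-x_k,w_k-y_k)$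 (Type 2). Farey data: $\frac st\boxplus\frac{s'}{t'}=\frac{s+s'}{t+t'}$; $L_0=\{\frac01,\frac11\}$ (not reduced); $L_{k+1}=L_k\cup\{a_{k,i}\boxplus a_{k,i+1}:1\le i\le 2^k\}$ listed increasingly as $a_{k+1,1}<\cdots<a_{k+1,2^{k+1}+1}$; $I_{k,i}=\left(\frac1{n+a_{k,i+1}},\frac1{n+a_{k,i}}\right)$; $i_k$ is the unique index with $\alpha\in I_{k,i_k}$. *)

From Stdlib Require Import Reals ZArith List Lia Lra.
Import ListNotations.
Open Scope R_scope.

Definition irrational (a : R) : Prop :=
  forall p q : Z, q <> 0%Z -> a <> IZR p / IZR q.

Fixpoint farey_refine (l : list (nat * nat)) : list (nat * nat) :=
  match l with
  | a :: ((b :: _) as r) => a :: (fst a + fst b, snd a + snd b)%nat :: farey_refine r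
  | _ => l
  end.

(* L_k, listed increasingly: a_{k,1} < ... < a_{k,2^k+1} *)
Fixpoint farey (k : nat) : list (nat * nat) :=
  match k with
  | O => [(0, 1); (1, 1)]%nat
  | S k' => farey_refine (farey k')
  end.

(* a_{k,i} as a real number (1-based index i) *)
Definition farey_a (k i : nat) : R :=
  let p := nth (i - 1) (farey k) (0, 1)%nat in INR (fst p) / INR (snd p).

Definition in_I (n k i : nat) (alpha : R) : Prop :=
  / (INR n + farey_a k (S i)) < alpha < / (INR n + farey_a k i).

(* The 4-tuple (x_k, y_k; z_k, w_k) of T_k, with T_0 the formal initial tuple.
   Type 1 / Type 2 of the step T_k -> T_{k+1}. *)
Definition type1 (x y z w : nat -> Z) (k : nat) : Prop :=
  x (S k) = (z k - x k)%Z /\ y (S k) = (w k - y k)%Z /\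
  z (S k) = x k /\ w (S k) = y k.

Definition type2 (x y z w : nat -> Z) (k : nat) : Prop :=
  x (S k) = x k /\ y (S k) = y k /\
  z (S k) = (z k - x k)%Z /\ w (S k) = (w k - y k)%Z.

Definition weight (a b : Z) (alpha : R) : R := (IZR a + IZR b * alpha) / 2.

From Stdlib Require Import Reals ZArith List Lia Lra Sorted.
Import ListNotations.
Open Scope R_scope.

(* Put t = 1/alpha - n, which lies in (0,1).  Up to the factor alpha/2, the
   smallest weight of T_k and the gap between its two smallest weights are
   affine functions of t with integer coefficients, and a Type 1 (resp. Type 2)
   splitting acts on this pair of functionals by (A, B) |-> (B, A - B)
   (resp. (A, B) |-> (A, B - A)).  By induction on k the pair is, in an order
   given by the sign of x_k, {v t - u, u' - v' t} where u/v < u'/v' are the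
   consecutive Farey fractions a_{k,i}, a_{k,i+1}; each splitting replaces one
   of them by the mediant, i.e. passes to the half 2i - 1 or 2i of the interval.
   Positivity of the weights says a_{k,i} < t < a_{k,i+1}, i.e. alpha lies in
   I_{k,i}, and this pins down i because Farey neighbours satisfy
   u' v - u v' = 1, so the a_{k,i} increase strictly. *)

Definition mediant (f g : nat * nat) : nat * nat := (fst f + fst g, snd f + snd g)%nat.

Lemma farey_refine_cons2 a b l :
  farey_refine (a :: b :: l) = a :: mediant a b :: farey_refine (b :: l).
Proof. reflexivity. Qed.

Lemma length_farey_refine l :
  l <> [] -> length (farey_refine l) = (2 * length l - 1)%nat.
Proof.
  induction l as [|a [|b l] IH]; intros Hl; [easy | reflexivity |].
  rewrite farey_refine_cons2. cbn [length] in *. rewrite IH by easy. lia.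
Qed.

Lemma nth_farey_refine_even l m d :
  (m < length l)%nat -> nth (2 * m) (farey_refine l) d = nth m l d.
Proof.
  revert m; induction l as [|a [|b l] IH]; intros m Hm; cbn [length] in Hm; try lia.
  - now replace m with 0%nat by lia.
  - destruct m as [|m]; [reflexivity|].
    rewrite farey_refine_cons2. replace (2 * S m)%nat with (S (S (2 * m))) by lia.
    apply IH. cbn [length]. lia.
Qed.

Lemma nth_farey_refine_odd l m d :
  (S m < length l)%nat ->
  nth (S (2 * m)) (farey_refine l) d = mediant (nth m l d) (nth (S m) l d).
Proof.
  revert m; induction l as [|a [|b l] IH]; intros m Hm; cbn [length] in Hm; try lia.
  rewrite farey_refine_cons2. destruct m as [|m]; [reflexivity|].
  replace (S (2 * S m)) with (S (S (S (2 * m)))) by lia.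
  apply IH. cbn [length]. lia.
Qed.

Lemma Forall_farey_refine (P : nat * nat -> Prop) l :
  (forall f g, P f -> P g -> P (mediant f g)) -> Forall P l -> Forall P (farey_refine l).
Proof.
  intros HP Hl; induction Hl as [|a l Ha Hl IH]; [constructor|].
  destruct l as [|b l]; [now constructor|].
  rewrite farey_refine_cons2. inversion Hl; subst.
  constructor; [exact Ha | constructor; [now apply HP | exact IH]].
Qed.

Lemma LocallySorted_farey_refine (R : nat * nat -> nat * nat -> Prop) l :
  (forall f g, R f g -> R f (mediant f g) /\ R (mediant f g) g) ->
  LocallySorted R l -> LocallySorted R (farey_refine l).
Proof.
  intros HR Hl; induction Hl as [| a | a b l Hl IH Hab]; [constructor.. |].
  rewrite farey_refine_cons2. destruct (HR a b Hab) as [Ham Hmb].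
  constructor; [|exact Ham].
  revert IH; destruct l; simpl; constructor; assumption.
Qed.

Lemma LocallySorted_nth {A} (R : A -> A -> Prop) l m d :
  LocallySorted R l -> (S m < length l)%nat -> R (nth m l d) (nth (S m) l d).
Proof.
  intros Hl; revert m; induction Hl as [| a | a b l Hl IH Hab]; intros m Hm;
    cbn [length] in Hm; try lia.
  destruct m as [|m]; [exact Hab|]. apply (IH m). cbn [length] in *. lia.
Qed.

Lemma length_farey k : length (farey k) = (2 ^ k + 1)%nat.
Proof.
  induction k as [|k IH]; [reflexivity|].
  cbn [farey]. rewrite length_farey_refine, IH; [cbn [Nat.pow]; lia|].
  intros E. rewrite E in IH. simpl in IH. lia.
Qed.

Definition farey_adjacent (f g : nat * nat) : Prop :=
  (fst g * snd f = fst f * snd g + 1)%nat.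

Lemma farey_denominators_pos k : Forall (fun f => 1 <= snd f)%nat (farey k).
Proof.
  induction k as [|k IH]; [repeat constructor|].
  apply Forall_farey_refine; [|exact IH].
  intros f g _ Hg. simpl. lia.
Qed.

Lemma farey_adjacent_sorted k : LocallySorted farey_adjacent (farey k).
Proof.
  induction k as [|k IH]; [repeat constructor|].
  apply LocallySorted_farey_refine; [|exact IH].
  unfold farey_adjacent; intros [u v] [u' v']; simpl; lia.
Qed.

Definition farey_pt (k i : nat) : nat * nat := nth (i - 1) (farey k) (0, 1)%nat.

Lemma farey_pt_denominator_pos k i :
  (1 <= i <= 2 ^ k + 1)%nat -> (1 <= snd (farey_pt k i))%nat.
Proof.
  intros Hi. apply (proj1 (Forall_nth _ _) (farey_denominators_pos k)).
  rewrite length_farey. lia.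
Qed.

Lemma farey_pt_adjacent k i :
  (1 <= i <= 2 ^ k)%nat -> farey_adjacent (farey_pt k i) (farey_pt k (S i)).
Proof.
  intros Hi. unfold farey_pt. replace (S i - 1)%nat with (S (i - 1)) by lia.
  apply LocallySorted_nth; [apply farey_adjacent_sorted|].
  rewrite length_farey. lia.
Qed.

Lemma farey_pt_succ_left k i :
  (1 <= i <= 2 ^ k)%nat -> farey_pt (S k) (2 * i - 1) = farey_pt k i.
Proof.
  intros Hi. unfold farey_pt. replace (2 * i - 1 - 1)%nat with (2 * (i - 1))%nat by lia.
  apply nth_farey_refine_even. rewrite length_farey. lia.
Qed.

Lemma farey_pt_succ_mediant k i :
  (1 <= i <= 2 ^ k)%nat ->
  farey_pt (S k) (2 * i) = mediant (farey_pt k i) (farey_pt k (S i)).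
Proof.
  intros Hi. unfold farey_pt.
  replace (2 * i - 1)%nat with (S (2 * (i - 1))) by lia.
  replace (S i - 1)%nat with (S (i - 1)) by lia.
  apply nth_farey_refine_odd. rewrite length_farey. lia.
Qed.

Lemma farey_pt_succ_right k i :
  (1 <= i <= 2 ^ k)%nat -> farey_pt (S k) (S (2 * i)) = farey_pt k (S i).
Proof.
  intros Hi. unfold farey_pt. replace (S (2 * i) - 1)%nat with (2 * i)%nat by lia.
  replace (S i - 1)%nat with i by lia.
  apply nth_farey_refine_even. rewrite length_farey. lia.
Qed.

Definition frac (f : nat * nat) : R := INR (fst f) / INR (snd f).

Lemma farey_a_frac k i : farey_a k i = frac (farey_pt k i).
Proof. reflexivity. Qed.

Lemma frac_nonneg f : 0 <= frac f.
Proof.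
  unfold frac. destruct (snd f) as [|v].
  - rewrite Rdiv_0_r. lra.
  - apply Rle_mult_inv_pos; [apply pos_INR | apply lt_0_INR; lia].
Qed.

Lemma frac_sub f t :
  (1 <= snd f)%nat -> frac f - t = (INR (fst f) - INR (snd f) * t) / INR (snd f).
Proof.
  intros Hv. apply (le_INR 1) in Hv. unfold frac. simpl in Hv. field. lra.
Qed.

Lemma frac_lt f t : (1 <= snd f)%nat -> INR (fst f) < INR (snd f) * t -> frac f < t.
Proof.
  intros Hv H. assert (Hv' := Hv). apply (le_INR 1) in Hv'. simpl in Hv'.
  enough (frac f - t < 0) by lra.
  rewrite frac_sub by exact Hv. apply Rdiv_neg_pos; lra.
Qed.

Lemma lt_frac f t : (1 <= snd f)%nat -> INR (snd f) * t < INR (fst f) -> t < frac f.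
Proof.
  intros Hv H. assert (Hv' := Hv). apply (le_INR 1) in Hv'. simpl in Hv'.
  enough (0 < frac f - t) by lra.
  rewrite frac_sub by exact Hv. apply Rdiv_lt_0_compat; lra.
Qed.

Lemma frac_lt_adjacent f g :
  (1 <= snd f)%nat -> (1 <= snd g)%nat -> farey_adjacent f g -> frac f < frac g.
Proof.
  unfold farey_adjacent, frac; destruct f as [u v], g as [u' v']; simpl.
  intros Hv Hv' Hdet. apply (le_INR 1) in Hv, Hv'. simpl in Hv, Hv'.
  apply (f_equal INR) in Hdet. rewrite plus_INR, !mult_INR in Hdet. simpl in Hdet.
  enough (0 < INR u' / INR v' - INR u / INR v) by lra.
  replace (INR u' / INR v' - INR u / INR v)
    with ((INR u' * INR v - INR u * INR v') / (INR v * INR v')) by (field; lra).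
  rewrite Hdet. apply Rdiv_lt_0_compat; [lra | apply Rmult_lt_0_compat; lra].
Qed.

Lemma farey_a_increasing k i : (1 <= i <= 2 ^ k)%nat -> farey_a k i < farey_a k (S i).
Proof.
  intros Hi. rewrite !farey_a_frac.
  apply frac_lt_adjacent; [apply farey_pt_denominator_pos; lia
    | apply farey_pt_denominator_pos; lia | now apply farey_pt_adjacent].
Qed.

Lemma increasing_le (f : nat -> R) (N a b : nat) :
  (forall m, (1 <= m <= N)%nat -> f m < f (S m)) ->
  (1 <= a)%nat -> (a <= b <= S N)%nat -> f a <= f b.
Proof.
  intros Hf Ha [Hab HbN]. induction Hab as [|b Hab IH]; [lra|].
  apply Rle_trans with (f b); [apply IH; lia | left; apply Hf; lia].
Qed.

Lemma between_increasing_unique (f : nat -> R) (N i j : nat) (t : R) :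
  (forall m, (1 <= m <= N)%nat -> f m < f (S m)) ->
  (1 <= i <= N)%nat -> (1 <= j <= N)%nat ->
  f i < t < f (S i) -> f j < t < f (S j) -> i = j.
Proof.
  intros Hf Hi Hj Hti Htj.
  destruct (Nat.lt_trichotomy i j) as [Hij | [Hij | Hij]]; [| exact Hij |].
  - pose proof (increasing_le f N (S i) j Hf ltac:(lia) ltac:(lia)). lra.
  - pose proof (increasing_le f N (S j) i Hf ltac:(lia) ltac:(lia)). lra.
Qed.

(* n >= 1 keeps n + a_{k,i} away from 0, where the inverse would be junk. *)
Lemma in_I_iff n k i alpha :
  0 < alpha -> (1 <= n)%nat ->
  in_I n k i alpha <-> farey_a k i < / alpha - INR n < farey_a k (S i).
Proof.
  intros Ha Hn. apply (le_INR 1) in Hn. simpl in Hn.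
  pose proof (frac_nonneg (farey_pt k i)) as Hai.
  pose proof (frac_nonneg (farey_pt k (S i))) as Hai'.
  pose proof (Rinv_0_lt_compat alpha Ha) as Hinv.
  unfold in_I. rewrite !farey_a_frac in *. split; intros [H1 H2]; split.
  - apply Rinv_0_lt_contravar in H2; [rewrite Rinv_inv in H2; lra | exact Ha].
  - apply Rinv_0_lt_contravar in H1; [rewrite Rinv_inv in H1; lra|].
    apply Rinv_0_lt_compat; lra.
  - rewrite <- (Rinv_inv alpha). apply Rinv_0_lt_contravar; lra.
  - rewrite <- (Rinv_inv alpha). apply Rinv_0_lt_contravar; lra.
Qed.

Lemma in_I_unique n k i j alpha :
  0 < alpha -> (1 <= n)%nat -> (1 <= i <= 2 ^ k)%nat -> (1 <= j <= 2 ^ k)%nat ->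
  in_I n k i alpha -> in_I n k j alpha -> i = j.
Proof.
  intros Ha Hn Hi Hj HIi HIj.
  apply (between_increasing_unique (farey_a k) (2 ^ k) i j (/ alpha - INR n));
    [apply farey_a_increasing | exact Hi | exact Hj | ..];
    apply in_I_iff; assumption.
Qed.

(* A pair c encodes the affine function t |-> c.1 t + c.2; up to the positive
   factor snd f, lower f is t - frac f and upper f is frac f - t. *)
Definition affine (c : Z * Z) (t : R) : R := IZR (fst c) * t + IZR (snd c).

Definition zsub (c d : Z * Z) : Z * Z := (fst c - fst d, snd c - snd d)%Z.

Definition lower (f : nat * nat) : Z * Z := (Z.of_nat (snd f), - Z.of_nat (fst f))%Z.

Definition upper (f : nat * nat) : Z * Z := (- Z.of_nat (snd f), Z.of_nat (fst f))%Z.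

Lemma affine_zsub c d t : affine (zsub c d) t = affine c t - affine d t.
Proof. unfold affine, zsub; simpl. rewrite !minus_IZR. ring. Qed.

Lemma lower_mediant f g : lower (mediant f g) = zsub (lower f) (upper g).
Proof. unfold lower, upper, zsub, mediant; simpl. f_equal; lia. Qed.

Lemma upper_mediant f g : upper (mediant f g) = zsub (upper g) (lower f).
Proof. unfold lower, upper, zsub, mediant; simpl. f_equal; lia. Qed.

Lemma affine_lower_pos f t : (1 <= snd f)%nat -> 0 < affine (lower f) t -> frac f < t.
Proof.
  unfold affine, lower; simpl. rewrite opp_IZR, <- !INR_IZR_INZ.
  intros Hv H. apply frac_lt; [exact Hv | lra].
Qed.

Lemma affine_upper_pos f t : (1 <= snd f)%nat -> 0 < affine (upper f) t -> t < frac f.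
Proof.
  unfold affine, upper; simpl. rewrite opp_IZR, <- !INR_IZR_INZ.
  intros Hv H. apply lt_frac; [exact Hv | lra].
Qed.

Definition coords (n : nat) (a b : Z) : Z * Z := (a, b + Z.of_nat n * a)%Z.

Lemma weight_affine n a b alpha :
  alpha <> 0 -> weight a b alpha = alpha / 2 * affine (coords n a b) (/ alpha - INR n).
Proof.
  intros Ha. unfold weight, affine, coords; simpl.
  rewrite plus_IZR, mult_IZR, <- INR_IZR_INZ. field. exact Ha.
Qed.

Definition child_index (s : bool) (i : nat) : nat :=
  if s then (2 * i - 1)%nat else (2 * i)%nat.

Lemma child_index_range s k i :
  (1 <= i <= 2 ^ k)%nat -> (1 <= child_index s i <= 2 ^ S k)%nat.
Proof. destruct s; simpl; lia. Qed.

Section Splitting_sequence.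

Variables (n : nat) (x y z w : nat -> Z).

Definition small_coords (k : nat) : Z * Z := coords n (x k) (y k).

Definition gap_coords (k : nat) : Z * Z :=
  zsub (coords n (z k) (w k)) (small_coords k).

Lemma type1_coords k :
  type1 x y z w k ->
  small_coords (S k) = gap_coords k /\
  gap_coords (S k) = zsub (small_coords k) (gap_coords k).
Proof.
  unfold type1, gap_coords, small_coords, coords, zsub; simpl.
  intros (-> & -> & -> & ->). split; f_equal; lia.
Qed.

Lemma type2_coords k :
  type2 x y z w k ->
  small_coords (S k) = small_coords k /\
  gap_coords (S k) = zsub (gap_coords k) (small_coords k).
Proof.
  unfold type2, gap_coords, small_coords, coords, zsub; simpl.
  intros (-> & -> & -> & ->). split; f_equal; lia.
Qed.

Definition farey_state (s : bool) (k i : nat) : Prop :=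
  if s
  then small_coords k = lower (farey_pt k i) /\ gap_coords k = upper (farey_pt k (S i))
  else small_coords k = upper (farey_pt k (S i)) /\ gap_coords k = lower (farey_pt k i).

Lemma farey_state_type1 s k i :
  (1 <= i <= 2 ^ k)%nat -> farey_state s k i -> type1 x y z w k ->
  farey_state (negb s) (S k) (child_index (negb s) i).
Proof.
  intros Hi Hst T. destruct (type1_coords k T) as [E1 E2].
  destruct s; cbn [negb child_index farey_state] in *;
    rewrite E1, E2; destruct Hst as [-> ->].
  - rewrite farey_pt_succ_mediant, farey_pt_succ_right, lower_mediant by exact Hi.
    split; reflexivity.
  - replace (S (2 * i - 1)) with (2 * i)%nat by lia.
    rewrite farey_pt_succ_left, farey_pt_succ_mediant, upper_mediant by exact Hi.
    split; reflexivity.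
Qed.

Lemma farey_state_type2 s k i :
  (1 <= i <= 2 ^ k)%nat -> farey_state s k i -> type2 x y z w k ->
  farey_state s (S k) (child_index s i).
Proof.
  intros Hi Hst T. destruct (type2_coords k T) as [E1 E2].
  destruct s; cbn [negb child_index farey_state] in *;
    rewrite E1, E2; destruct Hst as [-> ->].
  - replace (S (2 * i - 1)) with (2 * i)%nat by lia.
    rewrite farey_pt_succ_left, farey_pt_succ_mediant, upper_mediant by exact Hi.
    split; reflexivity.
  - rewrite farey_pt_succ_mediant, farey_pt_succ_right, lower_mediant by exact Hi.
    split; reflexivity.
Qed.

Lemma farey_state_sign s k i :
  (1 <= i <= 2 ^ k)%nat -> farey_state s k i ->
  if s then (0 < x k)%Z else (x k < 0)%Z.
Proof.
  unfold farey_state, small_coords, coords, lower, upper.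
  intros Hi Hst. destruct s; destruct Hst as [Hsmall _]; injection Hsmall as Hx _.
  - pose proof (farey_pt_denominator_pos k i). lia.
  - pose proof (farey_pt_denominator_pos k (S i)). lia.
Qed.

Lemma farey_state_between s k i t :
  (1 <= i <= 2 ^ k)%nat -> farey_state s k i ->
  0 < affine (small_coords k) t -> 0 < affine (gap_coords k) t ->
  farey_a k i < t < farey_a k (S i).
Proof.
  intros Hi Hst Hsmall Hgap. rewrite !farey_a_frac.
  assert (Hv : (1 <= snd (farey_pt k i))%nat) by (apply farey_pt_denominator_pos; lia).
  assert (Hv' : (1 <= snd (farey_pt k (S i)))%nat) by (apply farey_pt_denominator_pos; lia).
  destruct s; destruct Hst as [E1 E2]; rewrite E1 in Hsmall; rewrite E2 in Hgap;
    split; first [apply (affine_lower_pos _ _ Hv) | apply (affine_upper_pos _ _ Hv')];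
    assumption.
Qed.

Hypothesis Hinit :
  x 0%nat = 1%Z /\ y 0%nat = (- Z.of_nat n)%Z /\ z 0%nat = 0%Z /\ w 0%nat = 1%Z.
Hypothesis Hstep : forall k : nat, type1 x y z w k \/ type2 x y z w k.

Lemma farey_state_exists k : exists s i, (1 <= i <= 2 ^ k)%nat /\ farey_state s k i.
Proof.
  induction k as [|k (s & i & Hi & Hst)].
  - exists true, 1%nat. split; [simpl; lia|].
    destruct Hinit as (Hx & Hy & Hz & Hw).
    unfold farey_state, gap_coords, small_coords, coords, zsub, lower, upper.
    rewrite Hx, Hy, Hz, Hw. cbn [farey_pt farey nth Nat.sub fst snd].
    split; f_equal; lia.
  - destruct (Hstep k) as [T | T].
    + exists (negb s), (child_index (negb s) i). split; [now apply child_index_range|].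
      now apply farey_state_type1.
    + exists s, (child_index s i). split; [now apply child_index_range|].
      now apply farey_state_type2.
Qed.

Variable alpha : R.
Hypothesis Halpha : 0 < alpha.
Hypothesis Hn : (1 <= n)%nat.
Hypothesis Hfloor : INR n < / alpha < INR n + 1.
Hypothesis Hweights : forall k : nat, (1 <= k)%nat ->
  0 < weight (x k) (y k) alpha < weight (z k) (w k) alpha.

Lemma coords_affine_pos k :
  0 < affine (small_coords k) (/ alpha - INR n) /\
  0 < affine (gap_coords k) (/ alpha - INR n).
Proof.
  destruct k as [|k].
  - destruct Hinit as (Hx & Hy & Hz & Hw).
    unfold affine, gap_coords, small_coords, coords, zsub.
    rewrite Hx, Hy, Hz, Hw. cbn [fst snd].
    replace (- Z.of_nat n + Z.of_nat n * 1)%Z with 0%Z by lia.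
    replace (1 + Z.of_nat n * 0 - 0)%Z with 1%Z by lia.
    rewrite minus_IZR. simpl. lra.
  - destruct (Hweights (S k) ltac:(lia)) as [Hsmall Hgap].
    rewrite (weight_affine n) in Hsmall by lra.
    rewrite !(weight_affine n) in Hgap by lra.
    unfold gap_coords, small_coords. rewrite affine_zsub.
    assert (0 < alpha / 2) by lra.
    split.
    + apply (Rmult_lt_reg_l (alpha / 2)); lra.
    + enough (affine (coords n (x (S k)) (y (S k))) (/ alpha - INR n)
              < affine (coords n (z (S k)) (w (S k))) (/ alpha - INR n)) by lra.
      apply (Rmult_lt_reg_l (alpha / 2)); lra.
Qed.

Lemma farey_state_in_I s k i :
  (1 <= i <= 2 ^ k)%nat -> farey_state s k i -> in_I n k i alpha.
Proof.
  intros Hi Hst. apply in_I_iff; [exact Halpha | exact Hn |].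
  destruct (coords_affine_pos k). now apply (farey_state_between s).
Qed.

Lemma in_I_farey_state s k i j :
  (1 <= i <= 2 ^ k)%nat -> (1 <= j <= 2 ^ k)%nat ->
  farey_state s k i -> in_I n k j alpha -> j = i.
Proof.
  intros Hi Hj Hst HI.
  apply (in_I_unique n k j i alpha); try assumption.
  now apply (farey_state_in_I s).
Qed.

End Splitting_sequence.

Lemma floor_inv_bounds alpha n :
  0 < alpha < 1 -> irrational alpha -> INR n <= / alpha < INR n + 1 ->
  (1 <= n)%nat /\ INR n < / alpha < INR n + 1.
Proof.
  intros Ha Hirr [Hle Hlt].
  assert (Hinv : 1 < / alpha).
  { rewrite <- Rinv_1. apply Rinv_lt_contravar; lra. }
  assert (Hn : (1 <= n)%nat) by (destruct n; simpl in Hlt; [lra | lia]).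
  split; [exact Hn|]. split; [|exact Hlt]. destruct Hle as [Hlt' | Heq]; [exact Hlt'|].
  exfalso. apply (Hirr 1%Z (Z.of_nat n)); [lia|].
  rewrite <- INR_IZR_INZ, Heq. unfold Rdiv. rewrite Rinv_inv. ring.
Qed.

Lemma Z_sgn_if (s : bool) (a : Z) :
  (if s then 0 < a else a < 0)%Z -> Z.sgn a = if s then 1%Z else (-1)%Z.
Proof. destruct s; [apply Z.sgn_pos | apply Z.sgn_neg]. Qed.

Theorem corollary4p10
  (alpha : R) (n : nat) (x y z w : nat -> Z)
  (Halpha : 0 < alpha < 1) (Hirr : irrational alpha)
  (Hn : INR n <= / alpha < INR n + 1)
  (H0 : x 0%nat = 1%Z /\ y 0%nat = (- Z.of_nat n)%Z /\ z 0%nat = 0%Z /\ w 0%nat = 1%Z)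
  (Hstep : forall k : nat, type1 x y z w k \/ type2 x y z w k)
  (Hweights : forall k : nat, (1 <= k)%nat ->
     0 < weight (x k) (y k) alpha < weight (z k) (w k) alpha)
  (Hsign : forall k : nat, x k <> 0%Z) :
  forall k : nat,
    (forall i j : nat,
       (1 <= i <= 2 ^ k)%nat -> in_I n k i alpha ->
       (1 <= j <= 2 ^ (S k))%nat -> in_I n (S k) j alpha ->
       ((0 < x k)%Z -> type1 x y z w k -> j = (2 * i)%nat) /\
       ((0 < x k)%Z -> type2 x y z w k -> j = (2 * i - 1)%nat) /\
       ((x k < 0)%Z -> type1 x y z w k -> j = (2 * i - 1)%nat) /\
       ((x k < 0)%Z -> type2 x y z w k -> j = (2 * i)%nat)) /\
    (type1 x y z w k -> Z.sgn (x (S k)) = (- Z.sgn (x k))%Z) /\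
    (type2 x y z w k -> Z.sgn (x (S k)) = Z.sgn (x k)).
Proof.
  destruct (floor_inv_bounds alpha n Halpha Hirr Hn) as [Hn1 Hfloor].
  assert (Ha : 0 < alpha) by lra.
  intros k. destruct (farey_state_exists n x y z w H0 Hstep k) as (s & i0 & Hi0 & Hst).
  pose proof (farey_state_sign n x y z w s k i0 Hi0 Hst) as Hx.
  pose proof (farey_state_type1 n x y z w s k i0 Hi0 Hst) as Hst1.
  pose proof (farey_state_type2 n x y z w s k i0 Hi0 Hst) as Hst2.
  split; [|split].
  - intros i j Hi HI Hj HJ.
    assert (i = i0) as <- by (eapply in_I_farey_state; eauto).
    assert (J1 : type1 x y z w k -> j = child_index (negb s) i)
      by (intros T; eapply in_I_farey_state; eauto using child_index_range).
    assert (J2 : type2 x y z w k -> j = child_index s i)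
      by (intros T; eapply in_I_farey_state; eauto using child_index_range).
    destruct s; simpl in Hx, J1, J2; repeat split; intros Hxk T; auto; lia.
  - intros T. pose proof (farey_state_sign _ _ _ _ _ _ _ _
      (child_index_range (negb s) k i0 Hi0) (Hst1 T)) as Hx'.
    rewrite (Z_sgn_if _ _ Hx), (Z_sgn_if _ _ Hx'). now destruct s.
  - intros T. pose proof (farey_state_sign _ _ _ _ _ _ _ _
      (child_index_range s k i0 Hi0) (Hst2 T)) as Hx'.
    now rewrite (Z_sgn_if _ _ Hx), (Z_sgn_if _ _ Hx').
Qed.
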